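(* Let $F$ be a once-punctured torus equipped with a point of the decorated super Teichmüller space $S\tilde T(F)$ with values in the Grassmann algebra $\mathbb{R}_{S[N]}$, with super semi-perimeter $h$. Fix an ideal arc $\mathbf a$ with $\lambda$-length $a$. Let $\{\mathbf b_i\}_{i\in\mathbb Z}$ be the sequence of ideal arcs disjoint from $\mathbf a$, indexed so that $\{\mathbf a,\mathbf b_i,\mathbf b_{i+1}\}$ is an ideal triangulation for every $i$, and let $\mathbf c_i$ be the arc obtained from $\mathbf a$ by flipping it in the triangulation $\{\mathbf a,\mathbf b_i,\mathbf b_{i+1}\}$. Let $b_i,c_i$ be their $\lambda$-lengths. Then, for each $k$, \[ \|s_{2k}(b_i)\|=O(|i|^kR^{|i|})\quad\text{and}\quad \|s_{2k}(c_i)\|=O(|i|^{2k}R^{2|i|})\qquad(|i|\to\infty), \] where $R=\epsilon(r)$ is the body of $r=\tfrac12\big(ah-W_a+\sqrt{(ah-W_a)^2-4}\big)$.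
   Context: $\mathbb{R}_{S[N]}$ is the real Grassmann algebra generated by anticommuting $\beta_{[1]},\dots,\beta_{[N]}$; each $x$ is $\sum_\lambda x_\lambda\beta_{[\lambda]}$, the body $\epsilon(x)$ is the coefficient of $1$, $\|x\|=\sum_\lambda|x_\lambda|$, and $s_{2k}(x)$ is the sum of terms of degree $|\lambda|=2k$ (with $s_0(x)=\epsilon(x)\cdot1$). $S\tilde T(F)$ is the decorated $\mathrm{OSp}(1|2)$ super Teichmüller space (Penner–Zeitlin): a point assigns to each ideal triangulation of $F$ even $\lambda$-lengths with positive body to its three arcs (depending only on the arc), odd $\mu$-invariants to its two triangles, and a spin structure orienting each arc. For an arc $e$, $W_e=\theta_1\theta_2$ with $\theta_1,\theta_2$ the $\mu$-invariants of the triangles adjacent to $e$ counter-clockwise and clockwise of $e$ relative to its spin orientation. Flipping $c$ in a triangulation $\{a,b,c\}$ produces $d$ with $cd=a^2+b^2+abW_c$. The super semi-perimeter is $h=\frac{a}{bc}+\frac{b}{ac}+\frac{c}{ab}+\frac{W_a}{a}+\frac{W_b}{b}+\frac{W_c}{c}$ for any triangulation $\{a,b,c\}$. *)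

From HB Require Import structures.
From mathcomp Require Import all_boot all_order all_algebra.
From mathcomp Require Import reals.
Set Implicit Arguments. Unset Strict Implicit. Unset Printing Implicit Defensive.
Import Order.TTheory GRing.Theory Num.Theory.
Local Open Scope ring_scope.

(* The real Grassmann algebra R_{S[N]}: x = sum_lambda x_lambda beta_[lambda],
   lambda ranging over subsets of {0..N-1}; beta_[lambda] is the ordered
   product of the generators with indices in lambda (increasing order). *)
Section Grassmann.
Variables (R : realType) (N : nat).

Definition grass := {ffun {set 'I_N} -> R}.

Definition gcst (c : R) : grass := [ffun l : {set 'I_N} => if l == set0 then c else 0].
Definition gzero : grass := gcst 0.
Definition gone : grass := gcst 1.
Definition gadd (x y : grass) : grass := [ffun l : {set 'I_N} => x l + y l].
Definition gopp (x : grass) : grass := [ffun l : {set 'I_N} => - x l].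
Definition gsub (x y : grass) : grass := gadd x (gopp y).
Definition gscale (c : R) (x : grass) : grass := [ffun l : {set 'I_N} => c * x l].

(* number of inversions needed to reorder beta_[m] beta_[n] into beta_[m :|: n] *)
Definition ninv (m n : {set 'I_N}) : nat :=
  #|[set p : 'I_N * 'I_N | [&& p.1 \in m, p.2 \in n & (p.2 < p.1)%N]]|.

(* product: beta_[m] beta_[n] = (-1)^(ninv m n) beta_[m :|: n] for disjoint m n,
   and 0 otherwise *)
Definition gmul (x y : grass) : grass :=
  [ffun l : {set 'I_N} => \sum_(m : {set 'I_N} | m \subset l)
               (-1) ^+ ninv m (l :\: m) * x m * y (l :\: m)].

Definition gpow (x : grass) (n : nat) : grass := iter n (gmul x) gone.

Definition body (x : grass) : R := x set0.
Definition grnorm (x : grass) : R := \sum_(l : {set 'I_N}) `|x l|.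
Definition spart (k : nat) (x : grass) : grass :=
  [ffun l : {set 'I_N} => if #|l| == k.*2 then x l else 0].

Definition is_even (x : grass) : Prop := forall l : {set 'I_N}, odd #|l| -> x l = 0.
Definition is_odd (x : grass) : Prop := forall l : {set 'I_N}, ~~ odd #|l| -> x l = 0.

Definition gnil (x : grass) : grass := gsub x (gcst (body x)).
Definition gsum (n : nat) (f : nat -> grass) : grass := \big[gadd/gzero]_(k < n) f k.

Definition ginv (x : grass) : grass :=
  gscale (body x)^-1
    (gsum N.+1 (fun k => gpow (gscale (- (body x)^-1) (gnil x)) k)).
Definition gdiv (x y : grass) : grass := gmul x (ginv y).

Definition halfbinom (k : nat) : R :=
  (\prod_(j < k) (2^-1 - j%:R)) / (k`!)%:R.

Definition gsqrt (x : grass) : grass :=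
  gscale (Num.sqrt (body x))
    (gsum N.+1 (fun k => gscale (halfbinom k) (gpow (gscale (body x)^-1 (gnil x)) k))).

End Grassmann.

(* Once-punctured torus: ideal arcs <-> primitive vectors (p,q) in Z^2 up to
   sign (slopes p/q in Q u {oo}); geometric intersection number of two arcs is
   |det|; two distinct arcs are disjoint iff |det| = 1, and three pairwise
   disjoint distinct arcs form an ideal triangulation. *)
Definition vec := (int * int)%type.
Definition vneg (v : vec) : vec := (- v.1, - v.2).
Definition det (u v : vec) : int := u.1 * v.2 - u.2 * v.1.
Definition prim (v : vec) : bool := gcdz v.1 v.2 == 1.
Definition same_arc (u v : vec) : bool := (u == v) || (u == vneg v).
Definition tri (u v w : vec) : bool :=
  [&& prim u, prim v, prim w, `|det u v| == 1, `|det v w| == 1 & `|det u w| == 1].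

Section SuperPoint.
Variables (R : realType) (N : nat).
Local Notation G := (grass R N).

(* Data of a point of S~T(F) with values in R_{S[N]}, as used in the statement:
   lam e       = lambda-length of the arc e;
   W x y e     = W_e computed in the triangulation {x, y, e}. *)
Definition hT (lam : vec -> G) (W : vec -> vec -> vec -> G) (u v w : vec) : G :=
  gadd (gadd (gadd (gadd (gadd
    (gdiv (lam u) (gmul (lam v) (lam w)))
    (gdiv (lam v) (gmul (lam u) (lam w))))
    (gdiv (lam w) (gmul (lam u) (lam v))))
    (gdiv (W v w u) (lam u)))
    (gdiv (W u w v) (lam v)))
    (gdiv (W u v w) (lam w)).

Definition super_point (lam : vec -> G) (W : vec -> vec -> vec -> G) : Prop :=
  [/\
      forall v, lam (vneg v) = lam v,
      forall v, prim v -> is_even (lam v) /\ 0 < body (lam v),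
      forall x y e, [/\ W x y e = W y x e, W (vneg x) y e = W x y e
                     & W x y (vneg e) = W x y e],
      (* W_e = theta1 theta2, theta_i the odd mu-invariants of the two
         triangles, ordered ccw/cw w.r.t. the spin orientation of e *)
      forall u v w, tri u v w ->
        exists th1 th2 : G, [/\ is_odd th1, is_odd th2,
          (W v w u = gmul th1 th2 \/ W v w u = gmul th2 th1),
          (W u w v = gmul th1 th2 \/ W u w v = gmul th2 th1) &
          (W u v w = gmul th1 th2 \/ W u v w = gmul th2 th1)]
    &
      forall u v w d, tri u v w -> tri u v d -> ~~ same_arc d w ->
        gmul (lam w) (lam d) =
        gadd (gadd (gmul (lam u) (lam u)) (gmul (lam v) (lam v)))
             (gmul (gmul (lam u) (lam v)) (W u v w))].

End SuperPoint.

From HB Require Import structures.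
From mathcomp Require Import all_boot all_order all_algebra.
From mathcomp Require Import reals.
From mathcomp Require Import ring lra zify.
Set Implicit Arguments. Unset Strict Implicit. Unset Printing Implicit Defensive.
Import Order.TTheory GRing.Theory Num.Theory.
Local Open Scope ring_scope.

(* Flipping b_(i+1) in the triangulation {a, b_i, b_(i+1)} yields b_(i-1);
   combined with the semi-perimeter of that triangulation, the flip relation
   becomes the three-term recurrence
     b_(i+1) + b_(i-1) = (a h - W_a) b_i - a W_b,
   whose body is the linear recurrence with characteristic roots R and 1/R,
   R + 1/R = body (a h) > 2.  Each W is a product of two odd mu-invariants, so
   it has no terms of degree < 2; in the norm |x|_t = sum |x_l| t^|l| the
   recurrence is therefore a perturbation of size O(t^2) of the body
   recurrence, and |b_i|_t <= C (R + K t^2)^|i|.  The same holds for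
   c_i = (b_i^2 + b_(i+1)^2 + b_i b_(i+1) W) / a with exponent 2|i| + 2.
   Since |s_2k(x)| t^2k <= |x|_t, the choice t^2 ~ 1/|i| keeps
   (R + K t^2)^|i| within a constant factor of R^|i| and costs |i|^k. *)

Section RealBounds.
Variable R : realType.

Definition larger_root (x : R) := 2^-1 * (x + Num.sqrt (x * x - 4)).

Lemma larger_root_gt1 x : 2 < x -> 1 < larger_root x.
Proof. by move=> x2; rewrite /larger_root; have := sqrtr_ge0 (x * x - 4); lra. Qed.

Lemma larger_root_addV x : 2 < x -> larger_root x + (larger_root x)^-1 = x.
Proof.
move=> x2; set r := larger_root x; set s := Num.sqrt (x * x - 4).
have s2 : s * s = x * x - 4 by rewrite -expr2 sqr_sqrtr //; nra.
have r0 : r != 0 by apply: lt0r_neq0; apply: lt_trans (larger_root_gt1 x2).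
suff -> : r^-1 = 2^-1 * (x - s) by rewrite /r /larger_root -/s; field.
apply: (mulfI r0); rewrite mulfV // /r /larger_root -/s.
have -> : 2^-1 * (x + s) * (2^-1 * (x - s)) = (x * x - s * s) / 4 by field.
by rewrite s2; field.
Qed.

Lemma ler_iter_geometric (u : nat -> R) K : 0 <= K ->
  (forall n, u n.+1 <= K * u n) -> forall n, u n <= K ^+ n * u 0%N.
Proof.
move=> K0 hu; elim=> [|n ih]; first by rewrite expr0 mul1r.
by rewrite exprS -mulrA; apply: le_trans (hu n) _; apply: ler_wpM2l.
Qed.

Lemma expr1D_le2 (x : R) n : 0 <= x -> n%:R * x <= 2^-1 -> (1 + x) ^+ n <= 2.
Proof.
move=> x0 hn.
have bernoulli j : (1 + x) ^+ j * (1 - j%:R * x) <= 1.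
  elim: j => [|j ih]; first by rewrite expr0 mul0r subr0 mul1r.
  have a0 : 0 <= (1 + x) ^+ j by rewrite exprn_ge0 // addr_ge0.
  have : 0 <= (1 + x) ^+ j * (x * x * (j%:R + 1)) by rewrite !mulr_ge0 // addr_ge0.
  have -> : (1 + x) ^+ j.+1 * (1 - j.+1%:R * x) =
      (1 + x) ^+ j * (1 - j%:R * x) - (1 + x) ^+ j * (x * x * (j%:R + 1)).
    by rewrite exprS -addn1 natrD; ring.
  lra.
have := bernoulli n; have a0 : 0 <= (1 + x) ^+ n by rewrite exprn_ge0 // addr_ge0.
have : (1 + x) ^+ n * 2^-1 <= (1 + x) ^+ n * (1 - n%:R * x) by apply: ler_wpM2l => //; lra.
lra.
Qed.

Lemma perturbed_expr_le (rho K0 : R) (n p M : nat) : 1 <= rho -> 0 <= K0 -> (0 < n)%N ->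
  (p <= M * n)%N ->
  (rho + K0 * (n%:R * (2 * M%:R * K0 + 1))^-1) ^+ p <= 2 * rho ^+ p.
Proof.
move=> r1 K00 n0 pMn; set L := 2 * M%:R * K0 + 1; set u := (n%:R * L)^-1.
have n1 : 1 <= n%:R :> R by rewrite ler1n.
have L1 : 1 <= L by rewrite /L lerDr !mulr_ge0.
have u0 : 0 < u by rewrite invr_gt0 mulr_gt0 // (lt_le_trans ltr01).
have r0 : 0 < rho by apply: lt_le_trans r1.
have -> : rho + K0 * u = rho * (1 + K0 * u / rho) by field; apply: lt0r_neq0.
rewrite exprMn mulrC ler_wpM2r ?exprn_ge0 ?(ltW r0) //.
apply: expr1D_le2; first by rewrite divr_ge0 ?mulr_ge0 // ltW.
have Mn_u : M%:R * n%:R * (K0 * u) = M%:R * K0 / L.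
  by rewrite /u; field; rewrite !lt0r_neq0 ?(lt_le_trans ltr01).
have : M%:R * K0 / L <= 2^-1.
  by rewrite ler_pdivrMr ?(lt_le_trans ltr01) // /L; have := mulr_ge0 (ler0n R M) K00; lra.
have : p%:R * (K0 * u / rho) <= p%:R * (K0 * u).
  by rewrite ler_wpM2l // ler_pdivrMr // ler_peMr // mulr_ge0 // ltW.
have : p%:R * (K0 * u) <= M%:R * n%:R * (K0 * u).
  by apply: ler_wpM2r; [rewrite mulr_ge0 // ltW | rewrite -natrM ler_nat].
lra.
Qed.

End RealBounds.

Section Inversions.
Variable N : nat.
Implicit Types m n : {set 'I_N}.

Lemma ninvUl m1 m2 n : [disjoint m1 & m2] ->
  ninv (m1 :|: m2) n = (ninv m1 n + ninv m2 n)%N.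
Proof.
move=> dis; rewrite /ninv -cardsUI.
have -> : [set p | [&& p.1 \in m1 :|: m2, p.2 \in n & (p.2 < p.1)%N]] =
  [set p | [&& p.1 \in m1, p.2 \in n & (p.2 < p.1)%N]] :|:
  [set p | [&& p.1 \in m2, p.2 \in n & (p.2 < p.1)%N]].
  by apply/setP => p; rewrite !inE andb_orl.
suff -> : [set p | [&& p.1 \in m1, p.2 \in n & (p.2 < p.1)%N]] :&:
  [set p | [&& p.1 \in m2, p.2 \in n & (p.2 < p.1)%N]] = set0 by rewrite cards0 addn0.
apply/setP => p; rewrite !inE.
case h1: (p.1 \in m1) => //=; case h2: (p.1 \in m2) => //=; last by rewrite andbF.
by move/disjointFr: dis => /(_ _ h1); rewrite h2.
Qed.

Lemma ninvUr m n1 n2 : [disjoint n1 & n2] ->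
  ninv m (n1 :|: n2) = (ninv m n1 + ninv m n2)%N.
Proof.
move=> dis; rewrite /ninv -cardsUI.
have -> : [set p | [&& p.1 \in m, p.2 \in n1 :|: n2 & (p.2 < p.1)%N]] =
  [set p | [&& p.1 \in m, p.2 \in n1 & (p.2 < p.1)%N]] :|:
  [set p | [&& p.1 \in m, p.2 \in n2 & (p.2 < p.1)%N]].
  by apply/setP => p; rewrite !inE andb_orl andb_orr.
suff -> : [set p | [&& p.1 \in m, p.2 \in n1 & (p.2 < p.1)%N]] :&:
  [set p | [&& p.1 \in m, p.2 \in n2 & (p.2 < p.1)%N]] = set0 by rewrite cards0 addn0.
apply/setP => p; rewrite !inE.
case h1: (p.2 \in n1) => //=; case h2: (p.2 \in n2) => //=; rewrite ?andbF //.
by move/disjointFr: dis => /(_ _ h1); rewrite h2.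
Qed.

Lemma ninv0l n : ninv set0 n = 0%N.
Proof. by apply/eqP; rewrite cards_eq0; apply/eqP/setP => p; rewrite !inE. Qed.

Lemma ninv0r n : ninv n set0 = 0%N.
Proof. by apply/eqP; rewrite cards_eq0; apply/eqP/setP => p; rewrite !inE andbF. Qed.

(* Every pair in m x n is an inversion of exactly one of (m, n) and (n, m). *)
Lemma ninv_add_swap m n : [disjoint m & n] ->
  (ninv m n + ninv n m)%N = (#|m| * #|n|)%N.
Proof.
move=> dis; rewrite /ninv.
set B := [set p : 'I_N * 'I_N | [&& p.1 \in n, p.2 \in m & (p.2 < p.1)%N]].
set B' := [set p : 'I_N * 'I_N | [&& p.1 \in m, p.2 \in n & (p.1 < p.2)%N]].
have -> : #|B| = #|B'|.
  have -> : B' = [set (p.2, p.1) | p in B].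
    apply/setP => q; rewrite !inE; apply/idP/imsetP.
      move=> /and3P[h1 h2 h3]; exists (q.2, q.1); last by case: q {h1 h2 h3}.
      by rewrite inE /= h1 h2 h3.
    by move=> [p pB ->]; move: pB; rewrite inE => /and3P[h1 h2 h3] /=; rewrite h1 h2 h3.
  by rewrite card_imset // => p q [] h1 h2; case: p q h1 h2 => [??] [??] /= -> ->.
rewrite -cardsX -cardsUI.
have -> : [set p | [&& p.1 \in m, p.2 \in n & (p.2 < p.1)%N]] :&: B' = set0.
  apply/setP => p; rewrite !inE; case: (p.1 \in m); case: (p.2 \in n) => //=.
  by rewrite ltnNge; case: ltngtP.
rewrite cards0 addn0; apply: eq_card => p; rewrite !inE.
case h1: (p.1 \in m); case h2: (p.2 \in n) => //=.
have: p.1 != p.2 by apply/eqP => e; move/disjointFr: dis => /(_ _ h1); rewrite e h2.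
by rewrite -val_eqE /=; case: ltngtP.
Qed.

End Inversions.

Section SubsetAlgebra.
Variable T : finType.
Implicit Types m l : {set T}.

Lemma cards_subD m l : m \subset l -> (#|m| + #|l :\: m|)%N = #|l|.
Proof. by move=> ml; rewrite -(cardsID m l) (setIidPr ml). Qed.

Lemma setDDK m l : m \subset l -> l :\: (l :\: m) = m.
Proof. by move=> ml; rewrite setDDr setDv set0U (setIidPr ml). Qed.

Lemma setUDK m l : m \subset l -> m :|: (l :\: m) = l.
Proof.
move=> /subsetP ml; apply/setP => x; rewrite !inE.
by case xm: (x \in m) => //=; rewrite (ml _ xm).
Qed.

Lemma disjoint_setD m l : [disjoint m & l :\: m].
Proof. by rewrite disjoint_sym disjoints_subset setDE subsetIr. Qed.

Lemma big_supsets (V : nmodType) (F : {set T} -> V) m l : m \subset l ->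
  \sum_(q : {set T} | (q \subset l) && (m \subset q)) F q =
  \sum_(p : {set T} | p \subset l :\: m) F (m :|: p).
Proof.
move=> ml; rewrite (reindex_onto (fun p => m :|: p) (fun q => q :\: m)) /=.
  apply: eq_bigl => p; rewrite subUset ml subsetUl /= setDUl setDv set0U subsetD.
  apply/idP/idP => [/andP[/andP[-> _] /eqP/setDidPl]|/andP[-> dis]] //=.
  by apply/eqP/setDidPl.
by move=> q /andP[_ mq]; rewrite setUDK.
Qed.

End SubsetAlgebra.

Section GrassmannAlgebra.
Variables (R : realType) (N : nat).
Local Notation G := (grass R N).
Local Notation S := {set 'I_N}.
Local Notation sg m n := ((-1) ^+ ninv m n : R).
Implicit Types (x y z : G) (m l p q : S) (c : R).

Lemma gmulE x y l :
  gmul x y l = \sum_(m : S | m \subset l) sg m (l :\: m) * x m * y (l :\: m).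
Proof. by rewrite ffunE. Qed.
Lemma gaddE x y l : gadd x y l = x l + y l. Proof. by rewrite ffunE. Qed.
Lemma goppE x l : gopp x l = - x l. Proof. by rewrite ffunE. Qed.
Lemma gsubE x y l : gsub x y l = x l - y l. Proof. by rewrite /gsub gaddE goppE. Qed.
Lemma gscaleE c x l : gscale c x l = c * x l. Proof. by rewrite ffunE. Qed.
Lemma gcstE c l : gcst N c l = if l == set0 then c else 0. Proof. by rewrite ffunE. Qed.
Lemma gzeroE l : gzero R N l = 0. Proof. by rewrite /gzero gcstE; case: ifP. Qed.
Lemma goneE l : gone R N l = if l == set0 then 1 else 0. Proof. exact: gcstE. Qed.
Lemma gnilE x l : gnil x l = x l - (if l == set0 then body x else 0).
Proof. by rewrite /gnil gsubE gcstE. Qed.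
Lemma gsumE n (f : nat -> G) l : gsum n f l = \sum_(k < n) f k l.
Proof.
apply: (big_rec2 (fun (u : G) (v : R) => u l = v)); first by rewrite gzeroE.
by move=> i u v _ <-; rewrite gaddE.
Qed.

Definition grassE := (gaddE, gsubE, goppE, gscaleE, gcstE, gzeroE, goneE, gnilE, gsumE).

Lemma gaddC x y : gadd x y = gadd y x.
Proof. by apply/ffunP => l; rewrite !gaddE addrC. Qed.

Lemma gmulDl x y z : gmul (gadd x y) z = gadd (gmul x z) (gmul y z).
Proof.
apply/ffunP => l; rewrite !(gmulE, gaddE) -big_split /=.
by apply: eq_bigr => m _; rewrite gaddE; ring.
Qed.
Lemma gmulDr x y z : gmul x (gadd y z) = gadd (gmul x y) (gmul x z).
Proof.
apply/ffunP => l; rewrite !(gmulE, gaddE) -big_split /=.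
by apply: eq_bigr => m _; rewrite gaddE; ring.
Qed.
Lemma gmulBl x y z : gmul (gsub x y) z = gsub (gmul x z) (gmul y z).
Proof.
apply/ffunP => l; rewrite !(gmulE, gsubE) -sumrB /=.
by apply: eq_bigr => m _; rewrite gsubE; ring.
Qed.
Lemma gmulBr x y z : gmul x (gsub y z) = gsub (gmul x y) (gmul x z).
Proof.
apply/ffunP => l; rewrite !(gmulE, gsubE) -sumrB /=.
by apply: eq_bigr => m _; rewrite gsubE; ring.
Qed.
Lemma gmulZl c x y : gmul (gscale c x) y = gscale c (gmul x y).
Proof.
apply/ffunP => l; rewrite !(gmulE, gscaleE) mulr_sumr.
by apply: eq_bigr => m _; rewrite gscaleE; ring.
Qed.
Lemma gmulZr c x y : gmul x (gscale c y) = gscale c (gmul x y).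
Proof.
apply/ffunP => l; rewrite !(gmulE, gscaleE) mulr_sumr.
by apply: eq_bigr => m _; rewrite gscaleE; ring.
Qed.

Lemma gmul_cstl c x : gmul (gcst N c) x = gscale c x.
Proof.
apply/ffunP => l; rewrite gmulE gscaleE (bigD1 set0) ?sub0set //= big1 ?addr0.
  by rewrite gcstE eqxx setD0 ninv0l expr0 mul1r.
by move=> m /andP[_ /negbTE hm]; rewrite gcstE hm mulr0 mul0r.
Qed.
Lemma gmul_cstr c x : gmul x (gcst N c) = gscale c x.
Proof.
apply/ffunP => l; rewrite gmulE gscaleE (bigD1 l) ?subxx //= big1 ?addr0.
  by rewrite gcstE setDv eqxx ninv0r expr0 mul1r mulrC.
move=> m /andP[ml ne]; rewrite gcstE.
suff -> : (l :\: m == set0) = false by rewrite mulr0.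
by apply/negbTE; rewrite setD_eq0; apply: contra ne => lm; rewrite eqEsubset ml lm.
Qed.
Lemma gmul1l x : gmul (gone R N) x = x.
Proof. by rewrite gmul_cstl; apply/ffunP => l; rewrite gscaleE mul1r. Qed.
Lemma gmul1r x : gmul x (gone R N) = x.
Proof. by rewrite gmul_cstr; apply/ffunP => l; rewrite gscaleE mul1r. Qed.

Lemma gmul_gsum x n (f : nat -> G) : gmul x (gsum n f) = gsum n (fun i => gmul x (f i)).
Proof.
apply/ffunP => l; rewrite gmulE gsumE.
under eq_bigr => m _ do rewrite gsumE mulr_sumr.
by rewrite exchange_big /=; apply: eq_bigr => i _; rewrite gmulE.
Qed.

Lemma sign_ninvA m p q : [disjoint m & p] -> [disjoint p & q] ->
  sg m (p :|: q) * sg p q = sg (m :|: p) q * sg m p.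
Proof. by move=> dmp dpq; rewrite ninvUr // ninvUl // -!exprD; congr (_ ^+ _); lia. Qed.

Lemma gmulA x y z : gmul x (gmul y z) = gmul (gmul x y) z.
Proof.
apply/ffunP => l; rewrite !gmulE.
under [RHS]eq_bigr => q _ do rewrite gmulE mulr_sumr mulr_suml.
rewrite (exchange_big_dep (fun m => m \subset l)) /=; last first.
  by move=> q m ql mq; apply: subset_trans ql.
apply: eq_bigr => m ml; rewrite gmulE mulr_sumr (big_supsets _ ml).
apply: eq_bigr => p pl; set q := (l :\: m) :\: p.
have dmp : [disjoint m & p].
  by move: pl; rewrite subsetD disjoint_sym => /andP[].
have dpq : [disjoint p & q] by apply: disjoint_setD.
have -> : (m :|: p) :\: m = p.
  by rewrite setDUl setDv set0U; apply/setDidPl; rewrite disjoint_sym.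
rewrite -setDDl -/q {1}(_ : l :\: m = p :|: q); last by rewrite setUDK.
transitivity ((sg m (p :|: q) * sg p q) * (x m * y p * z q)); first by ring.
by rewrite sign_ninvA //; ring.
Qed.

Lemma body_mul x y : body (gmul x y) = body x * body y.
Proof.
rewrite /body gmulE (bigD1 set0) ?sub0set //= big1 ?addr0.
  by rewrite setD0 ninv0l expr0 mul1r.
by move=> m /andP[]; rewrite subset0 => ->.
Qed.

Lemma body_one : body (gone R N) = 1. Proof. by rewrite /body goneE eqxx. Qed.
Lemma body_cst c : body (gcst N c) = c. Proof. by rewrite /body gcstE eqxx. Qed.
Lemma body_add x y : body (gadd x y) = body x + body y. Proof. exact: gaddE. Qed.
Lemma body_sub x y : body (gsub x y) = body x - body y. Proof. exact: gsubE. Qed.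
Lemma body_scale c x : body (gscale c x) = c * body x. Proof. exact: gscaleE. Qed.

End GrassmannAlgebra.

Section Parity.
Variables (R : realType) (N : nat).
Local Notation G := (grass R N).
Local Notation S := {set 'I_N}.
Local Notation sg m n := ((-1) ^+ ninv m n : R).
Implicit Types (x y : G) (m l : S) (c : R).

Lemma gmul_swapE x y l : gmul y x l =
  \sum_(m : S | m \subset l) (-1) ^+ (#|m| * #|l :\: m|) * sg m (l :\: m) * x m * y (l :\: m).
Proof.
rewrite gmulE (reindex_onto (fun m => l :\: m) (fun m => l :\: m)) /=; last first.
  by move=> m ml; rewrite setDDK.
rewrite (eq_bigl (fun m => m \subset l)); last first.
  move=> m; rewrite subsetDl /=; apply/eqP/idP => [<-|ml]; first exact: subsetDl.
  exact: setDDK.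
apply: eq_bigr => m ml; rewrite setDDK //.
have -> : sg (l :\: m) m = (-1) ^+ (#|m| * #|l :\: m|) * sg m (l :\: m).
  rewrite -(ninv_add_swap (disjoint_setD m l)) exprD mulrC mulrA -exprD.
  by rewrite -[X in X * _]signr_odd oddD addbb expr0 mul1r.
ring.
Qed.

Lemma gmulC_even x y : is_even x -> gmul x y = gmul y x.
Proof.
move=> hx; apply/ffunP => l; rewrite [in RHS]gmul_swapE gmulE; apply: eq_bigr => m ml.
have [om|om] := boolP (odd #|m|); first by rewrite (hx m om) !(mulr0, mul0r).
by rewrite -[(-1) ^+ (#|m| * _)]signr_odd oddM (negbTE om) /= expr0 mul1r.
Qed.

Lemma gmulC_odd x y : is_odd x -> is_odd y -> gmul y x = gopp (gmul x y).
Proof.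
move=> hx hy; apply/ffunP => l.
rewrite goppE [in LHS]gmul_swapE gmulE -sumrN; apply: eq_bigr => m ml.
have [om|om] := boolP (odd #|m|); last by rewrite (hx m om) !(mulr0, mul0r) oppr0.
have [on|on] := boolP (odd #|l :\: m|); last by rewrite (hy _ on) !(mulr0, mul0r) oppr0.
by rewrite -[(-1) ^+ (#|m| * _)]signr_odd oddM om on /= expr1; ring.
Qed.

Lemma odd_card_setD m l : m \subset l -> odd #|l| = odd #|m| (+) odd #|l :\: m|.
Proof. by move=> ml; rewrite -oddD cards_subD. Qed.

Lemma even_mul x y : is_even x -> is_even y -> is_even (gmul x y).
Proof.
move=> hx hy l ol; rewrite gmulE big1 // => m ml.
move: ol; rewrite (odd_card_setD ml); have [om|om] /= := boolP (odd #|m|).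
  by rewrite (hx _ om) !(mulr0, mul0r).
by move=> on; rewrite (hy _ on) mulr0.
Qed.

Lemma odd_mul x y : is_odd x -> is_odd y -> is_even (gmul x y).
Proof.
move=> hx hy l ol; rewrite gmulE big1 // => m ml.
move: ol; rewrite (odd_card_setD ml); have [om|om] /= := boolP (odd #|m|).
  by move=> on; rewrite (hy _ on) mulr0.
by rewrite (hx _ om) !(mulr0, mul0r).
Qed.

Lemma even_add x y : is_even x -> is_even y -> is_even (gadd x y).
Proof. by move=> hx hy l ol; rewrite gaddE hx // hy // addr0. Qed.
Lemma even_opp x : is_even x -> is_even (gopp x).
Proof. by move=> hx l ol; rewrite goppE hx // oppr0. Qed.
Lemma even_sub x y : is_even x -> is_even y -> is_even (gsub x y).
Proof. by move=> hx hy; apply: even_add => //; apply: even_opp. Qed.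
Lemma even_scale c x : is_even x -> is_even (gscale c x).
Proof. by move=> hx l ol; rewrite gscaleE hx // mulr0. Qed.
Lemma even_cst c : is_even (gcst N c).
Proof. by move=> l ol; rewrite gcstE; case: eqP => // e; move: ol; rewrite e cards0. Qed.
Lemma even_gpow x n : is_even x -> is_even (gpow x n).
Proof. by move=> hx; elim: n => [|n ih] /=; [exact: even_cst | exact: even_mul]. Qed.
Lemma even_gsum n (f : nat -> G) : (forall i, is_even (f i)) -> is_even (gsum n f).
Proof. by move=> hf l ol; rewrite gsumE big1 // => i _; apply: hf. Qed.
Lemma even_ginv x : is_even x -> is_even (ginv x).
Proof.
move=> hx; apply/even_scale/even_gsum => i; apply/even_gpow/even_scale.
by apply: even_sub => //; apply: even_cst.
Qed.
Lemma even_gdiv x y : is_even x -> is_even y -> is_even (gdiv x y).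
Proof. by move=> hx hy; apply: even_mul => //; apply: even_ginv. Qed.

End Parity.

Section Inverse.
Variables (R : realType) (N : nat).
Local Notation G := (grass R N).
Local Notation S := {set 'I_N}.
Implicit Types (x y z : G) (l : S).

(* Induction on the degree: the degree-[l] part of [y z] is [body y * z l]
   plus terms involving only components of [z] of lower degree. *)
Lemma gmul_cancel y z z' : body y != 0 -> gmul y z = gmul y z' -> z = z'.
Proof.
move=> hy e; pose d := gsub z z'.
have hd l : gmul y d l = 0 by rewrite /d gmulBr e gsubE subrr.
suff d0 k l : (#|l| < k)%N -> d l = 0.
  by apply/ffunP => l; apply/eqP; rewrite -subr_eq0 -gsubE (d0 #|l|.+1).
elim: k l => [//|k ih] l lk; have := hd l; rewrite gmulE (bigD1 set0) ?sub0set //=.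
rewrite big1 ?addr0 ?setD0 ?ninv0l ?expr0 ?mul1r.
  by move/eqP; rewrite mulf_eq0 (negbTE hy) => /eqP.
move=> m /andP[ml m0]; rewrite ih ?mulr0 //.
have := cards_subD ml; have : (0 < #|m|)%N by rewrite lt0n cards_eq0.
lia.
Qed.

Lemma gpow_nil x k l : body x = 0 -> (#|l| < k)%N -> gpow x k l = 0.
Proof.
move=> hx; elim: k l => [//|k ih] l lk /=; rewrite gmulE big1 // => m ml.
have [->|m0] := eqVneq m set0; first by rewrite -[x set0]/(body x) hx !(mulr0, mul0r).
rewrite ih ?mulr0 //.
have := cards_subD ml; have : (0 < #|m|)%N by rewrite lt0n cards_eq0.
lia.
Qed.

Lemma card_le_dim l : (#|l| <= N)%N.
Proof. by rewrite -[X in (_ <= X)%N]card_ord max_card. Qed.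

(* With y = body y * (1 - z) and z nilpotent, the geometric series telescopes. *)
Lemma gmulV y : body y != 0 -> gmul y (ginv y) = gone R N.
Proof.
move=> hy; set u := body y; set z := gscale (- u^-1) (gnil y).
have ey : y = gscale u (gsub (gone R N) z).
  apply/ffunP => l; rewrite /z !grassE -/u; case: eqP => [->|_]; last by field.
  by rewrite -[y set0]/(body y) -/u; field.
have z0 : body z = 0 by rewrite /body /z gscaleE gnilE eqxx -[y set0]/(body y) subrr mulr0.
rewrite /ginv -/u -/z {1}ey gmulZl gmulZr gmulBl gmul1l gmul_gsum.
apply/ffunP => l; rewrite !grassE.
have := telescope_sumr (fun k => gpow z k l) (leq0n N.+1); rewrite big_mkord => tel.
have -> : \sum_(i < N.+1) gpow z i l - \sum_(i < N.+1) gmul z (gpow z i) l =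
    - \sum_(i < N.+1) (gpow z i.+1 l - gpow z i l).
  by rewrite -sumrB -sumrN; apply: eq_bigr => i _; rewrite opprB.
by rewrite tel gpow_nil ?ltnS ?card_le_dim // sub0r opprK goneE mulrA mulfV // mul1r.
Qed.

Lemma gmulVl y : body y != 0 -> gmul (ginv y) y = gone R N.
Proof. by move=> hy; apply: (gmul_cancel hy); rewrite gmulA gmulV // gmul1l gmul1r. Qed.

Lemma gdivK x y : body y != 0 -> gmul (gdiv x y) y = x.
Proof. by move=> hy; rewrite /gdiv -gmulA gmulVl // gmul1r. Qed.

Lemma body_ginv y : body y != 0 -> body (ginv y) = (body y)^-1.
Proof.
move=> hy; have := congr1 (@body R N) (gmulV hy); rewrite body_mul body_one => h.
by apply: (mulfI hy); rewrite h mulfV.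
Qed.

Lemma body_gdiv x y : body y != 0 -> body (gdiv x y) = body x / body y.
Proof. by move=> hy; rewrite /gdiv body_mul body_ginv. Qed.

Lemma body_gsqrt y : body (gsqrt y) = Num.sqrt (body y).
Proof.
rewrite /gsqrt body_scale /body gsumE big_ord_recl /= big1 ?addr0.
  by rewrite gscaleE /halfbinom big_ord0 fact0 divr1 mul1r goneE eqxx mulr1.
move=> i _; rewrite gscaleE -[gmul _ _ set0]/(body (gmul _ _)) body_mul.
by rewrite body_scale /body gnilE eqxx subrr mulr0 !mul0r mulr0.
Qed.

Lemma body_larger_root x :
  body (gscale 2^-1 (gadd x (gsqrt (gsub (gmul x x) (gcst N 4))))) = larger_root (body x).
Proof. by rewrite body_scale body_add body_gsqrt body_sub body_cst body_mul. Qed.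

End Inverse.

Section WeightedNorm.
Variables (R : realType) (N : nat).
Local Notation G := (grass R N).
Local Notation S := {set 'I_N}.
Implicit Types (x y : G) (l m : S) (c t : R).

(* The l^1 norm after rescaling every generator by [t]. *)
Definition wnorm t x : R := \sum_(l : S) `|x l| * t ^+ #|l|.

Definition deg_ge2 x := forall l, (#|l| <= 1)%N -> x l = 0.

Lemma wnorm_ge0 t x : 0 <= t -> 0 <= wnorm t x.
Proof. by move=> t0; apply: sumr_ge0 => l _; rewrite mulr_ge0 ?exprn_ge0. Qed.

Lemma wnormD t x y : 0 <= t -> wnorm t (gadd x y) <= wnorm t x + wnorm t y.
Proof.
move=> t0; rewrite /wnorm -big_split /=; apply: ler_sum => l _.
by rewrite gaddE -mulrDl ler_wpM2r ?exprn_ge0 // ler_normD.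
Qed.

Lemma wnormB t x y : 0 <= t -> wnorm t (gsub x y) <= wnorm t x + wnorm t y.
Proof.
move=> t0; rewrite /wnorm -big_split /=; apply: ler_sum => l _.
by rewrite gsubE -mulrDl ler_wpM2r ?exprn_ge0 // ler_normB.
Qed.

Lemma wnormZ t c x : wnorm t (gscale c x) = `|c| * wnorm t x.
Proof. by rewrite /wnorm mulr_sumr; apply: eq_bigr => l _; rewrite gscaleE normrM mulrA. Qed.

Lemma wnormN t x : wnorm t (gopp x) = wnorm t x.
Proof. by apply: eq_bigr => l _; rewrite goppE normrN. Qed.

Lemma wnormM t x y : 0 <= t -> wnorm t (gmul x y) <= wnorm t x * wnorm t y.
Proof.
move=> t0; pose w (z : G) (l : S) := `|z l| * t ^+ #|l|.
apply: (@le_trans _ _ (\sum_(l : S) \sum_(m : S | m \subset l) w x m * w y (l :\: m))).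
  apply: ler_sum => l _; rewrite gmulE.
  apply: le_trans; first by apply: ler_wpM2r; [exact: exprn_ge0 | exact: ler_norm_sum].
  rewrite mulr_suml; apply: ler_sum => m ml.
  rewrite /w !normrM normrX normrN1 expr1n mul1r -(cards_subD ml) exprD.
  by rewrite -!mulrA ler_wpM2l // (mulrCA (t ^+ _)) mulrA.
rewrite (exchange_big_dep predT) //= /wnorm mulr_suml; apply: ler_sum => m _.
have -> : \sum_(q : S | m \subset q) w x m * w y (q :\: m) =
    \sum_(p : S | p \subset ~: m) w x m * w y ((m :|: p) :\: m).
  rewrite -setTD -(big_supsets (fun q => w x m * w y (q :\: m))) ?subsetT //.
  by apply: eq_bigl => q; rewrite subsetT.
rewrite mulr_sumr big_mkcond /=; apply: ler_sum => p _.
case: ifPn => [mp|_]; last by rewrite /w !mulr_ge0 ?exprn_ge0.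
suff -> : (m :|: p) :\: m = p by [].
by rewrite setDUl setDv set0U; apply/setDidPl; rewrite disjoints_subset.
Qed.

Lemma wnorm_le1 t x : 0 <= t -> t <= 1 -> wnorm t x <= wnorm 1 x.
Proof.
move=> t0 t1; apply: ler_sum => l _; rewrite expr1n ler_wpM2l //.
exact: exprn_ile1.
Qed.

Lemma wnorm_deg_ge2 t x : 0 <= t -> t <= 1 -> deg_ge2 x -> wnorm t x <= t ^+ 2 * wnorm 1 x.
Proof.
move=> t0 t1 hx; rewrite /wnorm mulr_sumr; apply: ler_sum => l _.
have [hl|hl] := leqP #|l| 1; first by rewrite hx // normr0 !mul0r mulr0.
by rewrite expr1n mulr1 mulrC ler_wpM2r // ler_wiXn2l.
Qed.

Lemma grnorm_spart_le t k x : 0 <= t -> grnorm (spart k x) * t ^+ k.*2 <= wnorm t x.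
Proof.
move=> t0; rewrite /grnorm /wnorm mulr_suml; apply: ler_sum => l _; rewrite ffunE.
by case: eqP => [<-|_] //; rewrite normr0 mul0r mulr_ge0 ?exprn_ge0.
Qed.

Lemma deg_ge2_odd_mul x y : is_odd x -> is_odd y -> deg_ge2 (gmul x y).
Proof.
move=> hx hy l hl; rewrite gmulE big1 // => m ml; have e := cards_subD ml.
have [->|m0] := eqVneq m set0; first by rewrite hx ?cards0 // !(mulr0, mul0r).
suff -> : l :\: m = set0 by rewrite hy ?cards0 // mulr0.
by apply/eqP; rewrite -cards_eq0; move: m0; rewrite -cards_eq0; lia.
Qed.

Lemma deg_ge2_gnil x : is_even x -> deg_ge2 (gnil x).
Proof.
move=> hx l hl; rewrite gnilE; case: eqP => [->|ne]; first by rewrite subrr.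
rewrite hx ?subr0 //; have : #|l| != 0%N by rewrite cards_eq0; apply/eqP.
by move: hl; case: #|l| => [|[]].
Qed.

Lemma deg_ge2_opp x : deg_ge2 x -> deg_ge2 (gopp x).
Proof. by move=> hx l hl; rewrite goppE hx // oppr0. Qed.

Lemma deg_ge2_body x : deg_ge2 x -> body x = 0.
Proof. by move=> hx; rewrite /body hx // cards0. Qed.

Lemma wnorm_flip_le t (B C W : G) (Y : R) : 0 <= t ->
  wnorm t B <= Y -> wnorm t C <= Y ->
  wnorm t (gadd (gadd (gmul B B) (gmul C C)) (gmul (gmul B C) W)) <= Y * Y * (2 + wnorm t W).
Proof.
move=> t0 hB hC; have B0 := wnorm_ge0 B t0; have C0 := wnorm_ge0 C t0.
have W0 := wnorm_ge0 W t0; have Y0 : 0 <= Y := le_trans B0 hB.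
have sq (X : G) : wnorm t X <= Y -> wnorm t (gmul X X) <= Y * Y.
  by move=> hX; apply: le_trans (wnormM _ _ t0) _; apply: ler_pM; rewrite ?wnorm_ge0.
have BCW : wnorm t (gmul (gmul B C) W) <= Y * Y * wnorm t W.
  apply: le_trans (wnormM _ _ t0) _; rewrite ler_wpM2r //.
  by apply: le_trans (wnormM _ _ t0) _; apply: ler_pM.
have := sq B hB; have := sq C hC.
have := wnormD (gadd (gmul B B) (gmul C C)) (gmul (gmul B C) W) t0.
have := wnormD (gmul B B) (gmul C C) t0.
lra.
Qed.

End WeightedNorm.

Section SpartGrowth.
Variables (R : realType) (N : nat).
Local Notation G := (grass R N).

(* With [t ^+ 2 = (n L)^-1], the factor [(rho + K0 t^2)^(m n + e)] stays below
   [2 rho^(m n + e)], while dividing by [t ^+ 2k] costs [(n L)^k]. *)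
Lemma spart_growth (f : int -> G) k (rho K0 C0 : R) (m e : nat) :
  1 <= rho -> 0 <= K0 -> 0 <= C0 ->
  (forall i t, 0 < t -> t <= 1 ->
      wnorm t (f i) <= C0 * (rho + K0 * t ^+ 2) ^+ (m * absz i + e)) ->
  exists2 C : R, 0 <= C & forall i, (0 < absz i)%N ->
      grnorm (spart k (f i)) <= C * (absz i)%:R ^+ k * rho ^+ (m * absz i).
Proof.
move=> r1 K00 C00 hf; set L : R := 2 * (m + e)%:R * K0 + 1.
have L1 : 1 <= L by rewrite /L lerDr !mulr_ge0.
exists (L ^+ k * 2 * C0 * rho ^+ e).
  by rewrite !mulr_ge0 ?exprn_ge0 // (le_trans ler01).
move=> i i0; set n := absz i.
have n1 : 1 <= n%:R :> R by rewrite ler1n.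
have nL1 : 1 <= n%:R * L by nra.
have nL0 : 0 < n%:R * L := lt_le_trans ltr01 nL1.
set u := (n%:R * L)^-1; have u0 : 0 < u by rewrite invr_gt0.
set t := Num.sqrt u; have t2 : t ^+ 2 = u by rewrite sqr_sqrtr // ltW.
have t0 : 0 < t by rewrite sqrtr_gt0.
have t1 : t <= 1 by rewrite -(sqrtr1 R) ler_wsqrtr // invf_le1.
have hs := grnorm_spart_le k (f i) (ltW t0).
rewrite -muln2 mulnC exprM t2 in hs.
have hw := hf i t t0 t1; rewrite t2 in hw.
have pMn : (m * n + e <= (m + e) * n)%N by rewrite mulnDl leq_add2l leq_pmulr.
have hp := perturbed_expr_le r1 K00 i0 pMn.
have uk : u ^+ k * (n%:R * L) ^+ k = 1 by rewrite -exprMn mulVf ?expr1n // lt0r_neq0.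
have -> : grnorm (spart k (f i)) = grnorm (spart k (f i)) * u ^+ k * (n%:R * L) ^+ k.
  by rewrite -mulrA uk mulr1.
have -> : L ^+ k * 2 * C0 * rho ^+ e * n%:R ^+ k * rho ^+ (m * n) =
    C0 * (2 * rho ^+ (m * n + e)) * (n%:R * L) ^+ k by rewrite exprD exprMn; ring.
rewrite ler_wpM2r ?exprn_ge0 ?(ltW nL0) //; apply: (le_trans hs); apply: (le_trans hw).
by rewrite ler_wpM2l.
Qed.

End SpartGrowth.

Section PerturbedRecurrence.
Variables (R : realType) (N : nat) (t rho c : R) (B : nat -> grass R N).
Hypotheses (t_ge0 : 0 <= t) (rho_gt1 : 1 < rho) (c_ge0 : 0 <= c).

Local Notation E n := (gsub (gadd (B n.+2) (B n)) (gscale (rho + rho^-1) (B n.+1))).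
Hypothesis E_small : forall n, wnorm t (E n) <= c * wnorm t (B n.+1) + c.

(* [P] and [Q] diagonalise the unperturbed recurrence: they are multiplied by
   [rho] and [rho^-1] at each step, up to the error [E]. *)
Local Notation P n := (gsub (B n.+1) (gscale rho^-1 (B n))).
Local Notation Q n := (gsub (B n.+1) (gscale rho (B n))).
Local Notation d := (rho - rho^-1).
Local Notation s n := (wnorm t (P n) + wnorm t (Q n)).

Let rho_neq0 : rho != 0. Proof. by rewrite gt_eqF // (lt_trans ltr01). Qed.
Let rho_sqr_neq1 : rho * rho - 1 != 0.
Proof. by rewrite subr_eq0 gt_eqF // (lt_trans rho_gt1) // ltr_pMr // (lt_trans ltr01). Qed.
Let rho_ge0 : 0 <= rho. Proof. by rewrite ltW // (lt_trans ltr01). Qed.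
Let rhoV_gt0 : 0 < rho^-1. Proof. by rewrite invr_gt0 (lt_trans ltr01). Qed.
Let rhoV_lt1 : rho^-1 < 1. Proof. by rewrite invf_lt1 // (lt_trans ltr01). Qed.
Let d_gt0 : 0 < d. Proof. by rewrite subr_gt0 (lt_trans rhoV_lt1). Qed.
Let dV_ge0 : 0 <= d^-1. Proof. by rewrite invr_ge0 ltW. Qed.
Let s_ge0 n : 0 <= s n. Proof. by rewrite addr_ge0 ?wnorm_ge0. Qed.

Let P_succ n : P n.+1 = gadd (gscale rho (P n)) (E n).
Proof. by apply/ffunP => l; rewrite !grassE; field. Qed.

Let Q_succ n : Q n.+1 = gadd (gscale rho^-1 (Q n)) (E n).
Proof. by apply/ffunP => l; rewrite !grassE; field. Qed.

Let B_PQ n : B n = gscale d^-1 (gsub (P n) (Q n)).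
Proof.
by apply/ffunP => l; rewrite !grassE; field; rewrite rho_neq0 rho_sqr_neq1.
Qed.

Let B_succ_PQ n : B n.+1 = gscale d^-1 (gsub (gscale rho (P n)) (gscale rho^-1 (Q n))).
Proof.
by apply/ffunP => l; rewrite !grassE; field; rewrite rho_neq0 rho_sqr_neq1.
Qed.

Let wnorm_B n : wnorm t (B n) <= s n / d.
Proof. by rewrite {1}B_PQ wnormZ ger0_norm // mulrC ler_wpM2r //; apply: wnormB. Qed.

Let wnorm_B_succ n : wnorm t (B n.+1) <= rho * s n / d.
Proof.
rewrite {1}B_succ_PQ wnormZ ger0_norm // mulrC ler_wpM2r //.
apply: le_trans (wnormB _ _ t_ge0) _.
rewrite !wnormZ !ger0_norm ?(ltW rhoV_gt0) // mulrDr lerD2l ler_wpM2r ?wnorm_ge0 //.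
exact: ltW (lt_trans rhoV_lt1 rho_gt1).
Qed.

Local Notation K := (rho + 2 * c * (rho / d + 1)).

Let s_succ n : s n.+1 + 1 <= K * (s n + 1).
Proof.
have hE : wnorm t (E n) <= c * (rho / d) * s n + c.
  apply: le_trans (E_small n) _.
  by rewrite lerD2r -mulrA ler_wpM2l // mulrAC; apply: wnorm_B_succ.
have hP : wnorm t (P n.+1) <= rho * wnorm t (P n) + wnorm t (E n).
  by rewrite {1}P_succ; apply: le_trans (wnormD _ _ t_ge0) _; rewrite wnormZ ger0_norm.
have hQ : wnorm t (Q n.+1) <= rho * wnorm t (Q n) + wnorm t (E n).
  rewrite {1}Q_succ; apply: le_trans (wnormD _ _ t_ge0) _.
  rewrite wnormZ ger0_norm ?(ltW rhoV_gt0) // lerD2r ler_wpM2r ?wnorm_ge0 //.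
  exact: ltW (lt_trans rhoV_lt1 rho_gt1).
have hs : s n.+1 <= rho * s n + 2 * wnorm t (E n) by rewrite mulrDr; lra.
have -> : K * (s n + 1) = rho * s n + rho + 2 * (c * (rho / d) * s n + c) +
    2 * (c * (rho / d)) + 2 * (c * s n) by ring.
have : 0 <= c * s n by rewrite mulr_ge0.
have : 0 <= c * (rho / d) by rewrite mulr_ge0 // divr_ge0 // ltW.
have := rho_gt1; lra.
Qed.

Lemma wnorm_perturbed_recurrence n : wnorm t (B n) <= K ^+ n * (s 0%N + 1) / d.
Proof.
have K_ge0 : 0 <= K by rewrite addr_ge0 // !mulr_ge0 // addr_ge0 // divr_ge0 // ltW.
apply: le_trans (wnorm_B n) _; rewrite ler_wpM2r //.
apply: le_trans (ler_iter_geometric (u := fun n => s n + 1) K_ge0 s_succ n).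
by rewrite lerDl.
Qed.

End PerturbedRecurrence.

Section SemiPerimeter.
Variables (R : realType) (N : nat).
Local Notation G := (grass R N).
Variables (A B C Wa Wb Wc : G).
Hypotheses (eA : is_even A) (eB : is_even B) (eC : is_even C).
Hypotheses (nA : body A != 0) (nB : body B != 0) (nC : body C != 0).

Local Notation semiperimeter := (gadd (gadd (gadd (gadd (gadd
    (gdiv A (gmul B C)) (gdiv B (gmul A C))) (gdiv C (gmul A B)))
    (gdiv Wa A)) (gdiv Wb B)) (gdiv Wc C)).

Lemma semiperimeter_mulr : gmul semiperimeter (gmul A (gmul B C)) =
  gadd (gadd (gadd (gadd (gadd (gmul A A) (gmul B B)) (gmul C C))
    (gmul Wa (gmul B C))) (gmul Wb (gmul A C))) (gmul Wc (gmul A B)).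
Proof.
set P := gmul A (gmul B C).
have cancel (X Y Z : G) : body Z != 0 -> P = gmul Z Y -> gmul (gdiv X Z) P = gmul X Y.
  by move=> nZ ->; rewrite gmulA gdivK.
have nmul (X Y : G) : body X != 0 -> body Y != 0 -> body (gmul X Y) != 0.
  by move=> nX nY; rewrite body_mul mulf_neq0.
have P_BCA : P = gmul (gmul B C) A by rewrite /P gmulC_even.
have P_ACB : P = gmul (gmul A C) B by rewrite /P [gmul B C]gmulC_even // gmulA.
have P_ABC : P = gmul (gmul A B) C by rewrite /P gmulA.
have P_BAC : P = gmul B (gmul A C) by rewrite /P gmulA (gmulC_even _ eA) -gmulA.
have P_CAB : P = gmul C (gmul A B) by rewrite P_ABC gmulC_even //; apply: even_mul.
rewrite !gmulDl (cancel _ _ _ (nmul _ _ nB nC) P_BCA) (cancel _ _ _ (nmul _ _ nA nC) P_ACB).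
by rewrite (cancel _ _ _ (nmul _ _ nA nB) P_ABC) (cancel _ _ _ nA erefl)
  (cancel _ _ _ nB P_BAC) (cancel _ _ _ nC P_CAB).
Qed.

(* Multiply the semi-perimeter by [A B C] and cancel [C]: the flip relation
   [C D = A^2 + B^2 + A B Wc] absorbs the terms [A^2], [B^2] and [Wc A B]. *)
Lemma flip_add_semiperimeter D :
  gmul C D = gadd (gadd (gmul A A) (gmul B B)) (gmul (gmul A B) Wc) ->
  gadd C D = gsub (gmul (gsub (gmul A semiperimeter) Wa) B) (gmul A Wb).
Proof.
move=> flip; have eAB : is_even (gmul A B) by apply: even_mul.
have CW (X Y : G) : gmul C (gmul X Y) = gmul X (gmul Y C).
  by rewrite gmulA (gmulC_even _ eC) -gmulA (gmulC_even _ eC).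
have key : gmul semiperimeter (gmul A B) =
    gadd (gadd (gadd D C) (gmul Wa B)) (gmul Wb A).
  apply: (gmul_cancel nC); rewrite CW -gmulA semiperimeter_mulr !gmulDr CW CW flip.
  rewrite [gmul A C]gmulC_even // (gmulC_even _ eAB).
  by apply/ffunP => l; rewrite !gaddE; ring.
rewrite gmulBl (gmulC_even _ eA) -gmulA key (gmulC_even Wb eA).
by apply/ffunP => l; rewrite !grassE; ring.
Qed.

End SemiPerimeter.

Lemma detC (u v : vec) : det v u = - det u v.
Proof. by rewrite /det; ring. Qed.

Lemma tri_swap23 u v w : tri u v w -> tri u w v.
Proof.
case/and3P => pu pv /and4P [pw uv vw uw]; apply/and3P; split => //; apply/and4P; split => //.
by rewrite detC normrN.
Qed.

Lemma tri_swap12 u v w : tri u v w -> tri v u w.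
Proof.
case/and3P => pu pv /and4P [pw uv vw uw]; apply/and3P; split => //; apply/and4P; split => //.
by rewrite detC normrN.
Qed.

Lemma tri_rot u v w : tri u v w -> tri v w u.
Proof. by move=> /tri_swap12 /tri_swap23. Qed.

Lemma int_step_const (T : Type) (f : int -> T) :
  (forall i, f (i + 1) = f i) -> forall i, f i = f 0.
Proof.
move=> hf; have hN n : f (- n%:Z) = f 0.
  elim: n => [|n ih]; first by rewrite oppr0.
  by rewrite -ih -(hf (- n.+1%:Z)); congr f; lia.
case=> n; last by rewrite NegzE hN.
by elim: n => // n ih; rewrite -ih -(hf n); congr f; lia.
Qed.

Section SuperPointGrowth.
Variables (R : realType) (N : nat).
Local Notation G := (grass R N).
Variables (lam : vec -> G) (W : vec -> vec -> vec -> G) (h : G) (a : vec) (b c : int -> vec).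
Hypothesis super : super_point lam W.
Hypothesis h_semiperimeter : forall u v w, tri u v w -> hT lam W u v w = h.
Hypothesis tri_ab : forall i, tri a (b i) (b (i + 1)).
Hypothesis b_inj : forall i j, same_arc (b i) (b j) -> i = j.
Hypothesis c_flip : forall i, tri (b i) (b (i + 1)) (c i) /\ ~~ same_arc (c i) a.

Local Notation A := (lam a).

Lemma lam_even v : prim v -> is_even (lam v).
Proof. by case: super => _ hev _ _ _ /hev[]. Qed.

Lemma lam_body_gt0 v : prim v -> 0 < body (lam v).
Proof. by case: super => _ hev _ _ _ /hev[]. Qed.

Lemma lam_body_neq0 v : prim v -> body (lam v) != 0.
Proof. by move/lam_body_gt0/lt0r_neq0. Qed.

Lemma lam_flip u v w d : tri u v w -> tri u v d -> ~~ same_arc d w ->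
  gmul (lam w) (lam d) =
  gadd (gadd (gmul (lam u) (lam u)) (gmul (lam v) (lam v))) (gmul (gmul (lam u) (lam v)) (W u v w)).
Proof. by case: super => _ _ _ _; apply. Qed.

Definition up_to_sign (om X : G) := X = om \/ X = gopp om.

Lemma W_triangle u v w : tri u v w -> exists om : G,
  [/\ is_even om, deg_ge2 om, up_to_sign om (W v w u), up_to_sign om (W u w v)
    & up_to_sign om (W u v w)].
Proof.
case: super => _ _ _ hW _ /hW[th1 [th2 [o1 o2 h1 h2 h3]]].
have flip X : X = gmul th1 th2 \/ X = gmul th2 th1 -> up_to_sign (gmul th1 th2) X.
  by case=> ->; [left | right; apply: gmulC_odd].
by exists (gmul th1 th2); split; [exact: odd_mul | exact: deg_ge2_odd_mul | ..]; apply: flip.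
Qed.

Lemma up_to_sign_props om X : is_even om -> deg_ge2 om -> up_to_sign om X ->
  [/\ is_even X, deg_ge2 X & forall t, wnorm t X = wnorm t om].
Proof.
move=> eo dd; case=> ->; split => //; first exact: even_opp.
- exact: deg_ge2_opp.
- by move=> t; rewrite wnormN.
Qed.

Lemma prim_a : prim a. Proof. by case/and3P: (tri_ab 0). Qed.
Lemma prim_b i : prim (b i). Proof. by case/and3P: (tri_ab i). Qed.

Lemma tri_ab_pred i : tri a (b (i - 1)) (b i).
Proof. by have := tri_ab (i - 1); rewrite subrK. Qed.

Lemma b_pred_succ_neq i : ~~ same_arc (b (i - 1)) (b (i + 1)).
Proof. by apply/negP => /b_inj; lia. Qed.

(* Both flips of [b i] in the quadrilateral [b (i - 1), a, b (i + 1)] give the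
   same product, which forces the two [W]-terms to agree. *)
Lemma W_flip_sym i : W a (b i) (b (i + 1)) = W a (b i) (b (i - 1)).
Proof.
have f1 := lam_flip (tri_ab i) (tri_swap23 (tri_ab_pred i)) (b_pred_succ_neq i).
have ns : ~~ same_arc (b (i + 1)) (b (i - 1)).
  by apply/negP => /b_inj; lia.
have f2 := lam_flip (tri_swap23 (tri_ab_pred i)) (tri_ab i) ns.
rewrite (gmulC_even _ (lam_even (prim_b (i + 1)))) f2 in f1.
have nAB : body (gmul A (lam (b i))) != 0.
  by rewrite body_mul mulf_neq0 // lam_body_neq0 // ?prim_a ?prim_b.
apply: (gmul_cancel nAB); apply/ffunP => l.
by have := congr1 (fun g : G => g l) f1; rewrite !gaddE => /addrI.
Qed.

Definition W_norm t := wnorm t (W a (b 0) (b 1)).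

Lemma W_props i X :
  [\/ X = W (b i) (b (i + 1)) a, X = W a (b (i + 1)) (b i) | X = W a (b i) (b (i + 1))] ->
  [/\ is_even X, deg_ge2 X & forall t, wnorm t X = W_norm t].
Proof.
have W_norm_tri j t : wnorm t (W a (b j) (b (j + 1))) = W_norm t.
  pose f k := wnorm t (W a (b k) (b (k + 1))).
  suff /int_step_const fE : forall k, f (k + 1) = f k by rewrite -/(f j) fE /f add0r.
  move=> k; rewrite /f W_flip_sym addrK; have [om [eo dd _ h2 h3]] := W_triangle (tri_ab k).
  have [_ _ ->] := up_to_sign_props eo dd h2.
  by have [_ _ ->] := up_to_sign_props eo dd h3.
move=> hX; have [om [eo dd h1 h2 h3]] := W_triangle (tri_ab i).
have [_ _ Wom] := up_to_sign_props eo dd h3.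
have : up_to_sign om X by case: hX => ->.
case/(up_to_sign_props eo dd) => e1 d1 w1; split => // t.
by rewrite w1 -Wom W_norm_tri.
Qed.

Lemma h_even : is_even h.
Proof.
have T0 : tri a (b 0) (b 1) by have := tri_ab 0; rewrite add0r.
have eW X : [\/ X = W (b 0) (b 1) a, X = W a (b 1) (b 0) | X = W a (b 0) (b 1)] ->
    is_even X.
  by have := W_props (i := 0) (X := X); rewrite add0r => hW /hW[].
have := lam_even prim_a; have := lam_even (prim_b 0); have := lam_even (prim_b 1).
have := eW _ (Or31 _ _ erefl); have := eW _ (Or32 _ _ erefl); have := eW _ (Or33 _ _ erefl).
rewrite -(h_semiperimeter T0) /hT => *.
by repeat (apply: even_add || apply: even_gdiv || apply: even_mul).
Qed.

Lemma lam_b_recurrence i : gadd (lam (b (i + 1))) (lam (b (i - 1))) =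
  gsub (gmul (gsub (gmul A h) (W (b i) (b (i + 1)) a)) (lam (b i)))
       (gmul A (W a (b (i + 1)) (b i))).
Proof.
rewrite -(h_semiperimeter (tri_ab i)); apply: flip_add_semiperimeter.
- exact: lam_even prim_a.
- exact: lam_even (prim_b _).
- exact: lam_even (prim_b _).
- exact: lam_body_neq0 prim_a.
- exact: lam_body_neq0 (prim_b _).
- exact: lam_body_neq0 (prim_b _).
exact: lam_flip (tri_ab i) (tri_swap23 (tri_ab_pred i)) (b_pred_succ_neq i).
Qed.

Local Notation x0 := (body (gmul A h)).
Local Notation rho := (larger_root x0).

Lemma body_Ah_subW i :
  body (gsub (gmul A h) (W (b i) (b (i + 1)) a)) = x0.
Proof.
have [_ dW _] := W_props (Or31 _ _ (erefl (W (b i) (b (i + 1)) a))).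
by rewrite body_sub (deg_ge2_body dW) subr0.
Qed.

(* The body of the semi-perimeter relation is AM-GM: [a^2 + b0^2 + b1^2 > 2 b0 b1]. *)
Lemma body_Ah_gt2 : 2 < x0.
Proof.
have T0 : tri a (b 0) (b 1) by have := tri_ab 0; rewrite add0r.
have W0 X : [\/ X = W (b 0) (b 1) a, X = W a (b 1) (b 0) | X = W a (b 0) (b 1)] ->
    body X = 0.
  by have := W_props (i := 0) (X := X); rewrite add0r => hW /hW[_ /deg_ge2_body].
have pa := lam_body_gt0 prim_a; have p0 := lam_body_gt0 (prim_b 0).
have p1 := lam_body_gt0 (prim_b 1).
rewrite -(h_semiperimeter T0) /hT body_mul !body_add.
rewrite !body_gdiv ?body_mul ?mulf_neq0 ?lt0r_neq0 //.
rewrite (W0 _ (Or31 _ _ erefl)) (W0 _ (Or32 _ _ erefl)) (W0 _ (Or33 _ _ erefl)).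
set al := body A in pa *; set b0 := body (lam (b 0)) in p0 *.
set b1 := body (lam (b 1)) in p1 *.
have -> : al * (al / (b0 * b1) + b0 / (al * b1) + b1 / (al * b0) + 0 / al + 0 / b0 + 0 / b1)
    = (al ^+ 2 + b0 ^+ 2 + b1 ^+ 2) / (b0 * b1).
  by field; rewrite !lt0r_neq0.
have : 0 <= (b0 - b1) ^+ 2 := sqr_ge0 _.
have : 0 < al ^+ 2 := exprn_gt0 _ pa.
by rewrite ltr_pdivlMr ?mulr_gt0 //; nra.
Qed.

Lemma rho_gt1 : 1 < rho. Proof. exact: larger_root_gt1 body_Ah_gt2. Qed.

Lemma rho_ge0 : 0 <= rho. Proof. exact: ltW (lt_trans ltr01 rho_gt1). Qed.

Lemma rho_addV : rho + rho^-1 = x0. Proof. exact: larger_root_addV body_Ah_gt2. Qed.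

Definition c0 := wnorm 1 (gnil (gmul A h)) + W_norm 1 + wnorm 1 A * W_norm 1.

Lemma c0_ge0 : 0 <= c0.
Proof. by rewrite /c0 /W_norm !addr_ge0 ?mulr_ge0 ?wnorm_ge0. Qed.

(* The error of the unperturbed recurrence is [(gnil (A h) - W_a) b_i - A W_b],
   all of whose factors [gnil (A h)], [W_a], [W_b] have no terms of degree < 2. *)
Lemma recurrence_error t i : 0 <= t -> t <= 1 ->
  wnorm t (gsub (gadd (lam (b (i + 1))) (lam (b (i - 1)))) (gscale x0 (lam (b i))))
    <= c0 * t ^+ 2 * wnorm t (lam (b i)) + c0 * t ^+ 2.
Proof.
move=> t0 t1; set Wa := W (b i) (b (i + 1)) a; set Wb := W a (b (i + 1)) (b i).
set B := lam (b i); set c1 := wnorm 1 (gnil (gmul A h)); set F := W_norm 1.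
set wA := wnorm 1 A; set w := wnorm t B.
have -> : gsub (gadd (lam (b (i + 1))) (lam (b (i - 1)))) (gscale x0 B) =
    gsub (gmul (gsub (gnil (gmul A h)) Wa) B) (gmul A Wb).
  rewrite lam_b_recurrence /gnil !gmulBl gmul_cstl.
  by apply/ffunP => l; rewrite !grassE; ring.
have [_ dWa wWa] := W_props (Or31 _ _ (erefl Wa)).
have [_ dWb wWb] := W_props (Or32 _ _ (erefl Wb)).
have dAh : deg_ge2 (gnil (gmul A h)).
  by apply/deg_ge2_gnil/even_mul; [exact: lam_even prim_a | exact: h_even].
have hMB : wnorm t (gmul (gsub (gnil (gmul A h)) Wa) B) <= (c1 + F) * (t ^+ 2 * w).
  apply: le_trans (wnormM _ _ t0) _; rewrite mulrA ler_wpM2r ?wnorm_ge0 // mulrC.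
  apply: le_trans (wnormB _ _ t0) _; rewrite mulrDr /F -(wWa 1).
  by apply: lerD; apply: wnorm_deg_ge2.
have hAW : wnorm t (gmul A Wb) <= wA * (t ^+ 2 * F).
  apply: le_trans (wnormM _ _ t0) _; apply: ler_pM; rewrite ?wnorm_ge0 ?wnorm_le1 //.
  by rewrite /F -(wWb 1) wnorm_deg_ge2.
apply: le_trans (wnormB _ _ t0) _.
have F0 : 0 <= F := wnorm_ge0 _ ler01; have c10 : 0 <= c1 := wnorm_ge0 _ ler01.
have : 0 <= wA * F * (t ^+ 2 * w) by rewrite !mulr_ge0 ?exprn_ge0 ?wnorm_ge0.
have : 0 <= (c1 + F) * t ^+ 2 by rewrite mulr_ge0 ?addr_ge0 ?exprn_ge0.
rewrite /c0 -/c1 -/F -/wA; lra.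
Qed.

Local Notation lam_b_dir s k := (lam (b ((-1) ^+ s * k%:Z))).

Lemma recurrence_error_dir t (s : bool) n : 0 <= t -> t <= 1 ->
  wnorm t (gsub (gadd (lam_b_dir s n.+2) (lam_b_dir s n)) (gscale (rho + rho^-1) (lam_b_dir s n.+1)))
    <= c0 * t ^+ 2 * wnorm t (lam_b_dir s n.+1) + c0 * t ^+ 2.
Proof.
move=> t0 t1; have := recurrence_error ((-1) ^+ s * n.+1%:Z) t0 t1.
rewrite rho_addV; case: s; rewrite ?expr0 ?expr1 ?mul1r ?mulN1r.
- by rewrite gaddC; congr (wnorm _ (gsub (gadd (lam (b _)) (lam (b _))) _) <= _); lia.
- by congr (wnorm _ (gsub (gadd (lam (b _)) (lam (b _))) _) <= _); lia.
Qed.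

Definition K0 := 2 * c0 * (rho / (rho - rho^-1) + 1).

Definition init_norm (s : bool) :=
  wnorm 1 (gsub (lam (b ((-1) ^+ s))) (gscale rho^-1 (lam (b 0)))) +
  wnorm 1 (gsub (lam (b ((-1) ^+ s))) (gscale rho (lam (b 0)))).

Definition Cb := (init_norm false + init_norm true + 1) / (rho - rho^-1).

Lemma rho_subV_gt0 : 0 < rho - rho^-1.
Proof.
have r1 := rho_gt1; rewrite subr_gt0 (lt_trans _ r1) //.
by rewrite invf_lt1 // (lt_trans ltr01).
Qed.

Lemma K0_ge0 : 0 <= K0.
Proof.
by rewrite /K0 !mulr_ge0 ?c0_ge0 // addr_ge0 // divr_ge0 ?rho_ge0 // ltW // rho_subV_gt0.
Qed.

Lemma Cb_ge0 : 0 <= Cb.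
Proof.
by rewrite /Cb divr_ge0 ?(ltW rho_subV_gt0) // !addr_ge0 ?wnorm_ge0.
Qed.

Lemma b_bound i t : 0 < t -> t <= 1 ->
  wnorm t (lam (b i)) <= Cb * (rho + K0 * t ^+ 2) ^+ absz i.
Proof.
move=> t0 t1; have ct : 0 <= c0 * t ^+ 2 by rewrite mulr_ge0 ?c0_ge0 ?exprn_ge0 ?ltW.
have := wnorm_perturbed_recurrence (B := fun k => lam_b_dir (i < 0)%R k) (ltW t0) rho_gt1 ct
  (fun n => recurrence_error_dir (i < 0)%R n (ltW t0) t1) (absz i).
rewrite -intEsign mulr1 mulr0 => /le_trans; apply.
have -> : rho + 2 * (c0 * t ^+ 2) * (rho / (rho - rho^-1) + 1) = rho + K0 * t ^+ 2.
  by rewrite /K0; ring.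
have X0 : 0 <= rho + K0 * t ^+ 2.
  by rewrite addr_ge0 ?rho_ge0 // mulr_ge0 ?K0_ge0 // exprn_ge0 // ltW.
rewrite -mulrA [Cb * _]mulrC ler_wpM2l ?exprn_ge0 //.
rewrite /Cb ler_wpM2r ?invr_ge0 ?(ltW rho_subV_gt0) // lerD2r.
have init_le s : init_norm s <= init_norm false + init_norm true.
  by case: s; rewrite ?lerDl ?lerDr addr_ge0 ?wnorm_ge0.
apply: le_trans (init_le (i < 0)%R); rewrite /init_norm.
by apply: lerD; apply: wnorm_le1; rewrite ?(ltW t0).
Qed.

Definition Cc := wnorm 1 (ginv A) * (Cb * Cb) * (2 + W_norm 1).

Lemma Cc_ge0 : 0 <= Cc.
Proof.
have := Cb_ge0; rewrite /Cc /W_norm; move: Cb => C C0.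
by rewrite !mulr_ge0 ?addr_ge0 ?wnorm_ge0.
Qed.

Lemma c_bound i t : 0 < t -> t <= 1 ->
  wnorm t (lam (c i)) <= Cc * (rho + K0 * t ^+ 2) ^+ (2 * absz i + 2).
Proof.
move=> t0 t1; set X := rho + K0 * t ^+ 2.
have X1 : 1 <= X.
  have : 0 <= K0 * t ^+ 2 by rewrite mulr_ge0 ?K0_ge0 // exprn_ge0 // ltW.
  by have := rho_gt1; rewrite /X; lra.
have bY j : (absz j <= (absz i).+1)%N -> wnorm t (lam (b j)) <= Cb * X ^+ (absz i).+1.
  move=> ji; apply: le_trans (b_bound j t0 t1) _.
  by rewrite ler_wpM2l ?Cb_ge0 // ler_weXn2l.
have [_ _ wW] := W_props (Or31 _ _ (erefl (W (b i) (b (i + 1)) a))).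
have flip := lam_flip (tri_rot (tri_ab i)) (c_flip i).1 (c_flip i).2.
have -> : lam (c i) = gmul (ginv A) (gmul A (lam (c i))).
  by rewrite gmulA gmulVl ?gmul1l // lam_body_neq0 // prim_a.
rewrite flip; apply: le_trans (wnormM _ _ (ltW t0)) _.
have ji : (absz (i + 1)%R <= (absz i).+1)%N by lia.
set Y := Cb * X ^+ (absz i).+1 in bY.
have Y0 : 0 <= Y by rewrite mulr_ge0 ?Cb_ge0 ?exprn_ge0 ?(le_trans ler01).
have hS := wnorm_flip_le (W (b i) (b (i + 1)) a) (ltW t0) (bY i (leqnSn _)) (bY (i + 1) ji).
have hW : W_norm t <= W_norm 1 := wnorm_le1 _ (ltW t0) t1.
rewrite wW in hS; have {}hS := le_trans hS (ler_wpM2l (mulr_ge0 Y0 Y0) (lerD (lexx 2) hW)).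
apply: le_trans (ler_pM (wnorm_ge0 _ (ltW t0)) (wnorm_ge0 _ (ltW t0))
  (wnorm_le1 _ (ltW t0) t1) hS) _.
rewrite /Cc (_ : (2 * absz i + 2 = (absz i).+1 + (absz i).+1)%N) ?exprD; last by lia.
by rewrite /Y le_eqVlt; apply/orP; left; apply/eqP; ring.
Qed.

Lemma b_spart_bound k : exists C : R, exists M : nat, forall i : int, (M <= absz i)%N ->
  grnorm (spart k (lam (b i))) <= C * (absz i)%:R ^+ k * rho ^+ absz i.
Proof.
have hb i t : 0 < t -> t <= 1 ->
    wnorm t (lam (b i)) <= Cb * (rho + K0 * t ^+ 2) ^+ (1 * absz i + 0).
  by rewrite mul1n addn0; apply: b_bound.
have [C _ hC] := spart_growth k (ltW rho_gt1) K0_ge0 Cb_ge0 hb.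
by exists C, 1%N => i i1; rewrite -[X in rho ^+ X]mul1n; apply: hC.
Qed.

Lemma c_spart_bound k : exists C : R, exists M : nat, forall i : int, (M <= absz i)%N ->
  grnorm (spart k (lam (c i))) <= C * (absz i)%:R ^+ (2 * k) * rho ^+ (2 * absz i).
Proof.
have [C C0 hC] := spart_growth k (ltW rho_gt1) K0_ge0 Cc_ge0 c_bound.
exists C, 1%N => i i1; apply: le_trans (hC i i1) _.
rewrite ler_wpM2r ?exprn_ge0 ?rho_ge0 // ler_wpM2l //.
by rewrite ler_weXn2l ?ler1n // leq_pmull.
Qed.

End SuperPointGrowth.

Theorem lemma5p4 (R : realType) (N : nat)
  (lam : vec -> grass R N) (W : vec -> vec -> vec -> grass R N)
  (h : grass R N) (a : vec) (b c : int -> vec) :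
  super_point lam W ->
  (* h is the super semi-perimeter (same value for every triangulation) *)
  (forall u v w, tri u v w -> hT lam W u v w = h) ->
  prim a ->
  (* {b_i} : the arcs disjoint from a, with {a, b_i, b_{i+1}} triangulations *)
  (forall i, tri a (b i) (b (i + 1))) ->
  (forall v, prim v -> `|det a v| = 1 -> exists i, same_arc v (b i)) ->
  (forall i j, same_arc (b i) (b j) -> i = j) ->
  (* c_i : the flip of a in {a, b_i, b_{i+1}} *)
  (forall i, tri (b i) (b (i + 1)) (c i) /\ ~~ same_arc (c i) a) ->
  let x := gsub (gmul (lam a) h) (W (b 0) (b 1) a) in
  let r := gscale 2^-1 (gadd x (gsqrt (gsub (gmul x x) (gcst N 4)))) in
  let Rb := body r in
  forall k : nat,
    (exists C : R, exists M : nat, forall i : int, (M <= absz i)%N ->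
       grnorm (spart k (lam (b i))) <= C * (absz i)%:R ^+ k * Rb ^+ absz i)
 /\ (exists C : R, exists M : nat, forall i : int, (M <= absz i)%N ->
       grnorm (spart k (lam (c i))) <= C * (absz i)%:R ^+ (2 * k) * Rb ^+ (2 * absz i)).
Proof.
move=> super h_semiperimeter _ tri_ab _ b_inj c_flip x r Rb k.
have xE : body x = body (gmul (lam a) h).
  by have := body_Ah_subW h super tri_ab b_inj 0; rewrite add0r.
rewrite /Rb /r body_larger_root xE; split.
- exact: b_spart_bound super h_semiperimeter tri_ab b_inj k.
- exact: c_spart_bound super h_semiperimeter tri_ab b_inj c_flip k.
Qed.
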